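(* Let $\mathcal{P}_1,\mathcal{P}_2\subseteq\mathbb{R}^n$ be non-empty topologically closed convex polyhedra. Suppose there exist a linear non-strict inequality constraint $\beta=(\langle \mathbf{a},\mathbf{x}\rangle\le b)$, with $\mathbf{a}\in\mathbb{R}^n\setminus\{\mathbf{0}\}$ and $b\in\mathbb{R}$, and a vector $\mathbf{p}\in\mathbb{R}^n$ such that: (1) $\mathbf{p}$ saturates $\beta$, i.e., $\langle\mathbf{a},\mathbf{p}\rangle=b$; (2) every point of $\mathcal{P}_1$ satisfies $\beta$, while some point of $\mathcal{P}_2$ violates $\beta$; (3) $\mathbf{p}\in\mathcal{P}_1\setminus\mathcal{P}_2$. Then $\mathcal{P}_1\cup\mathcal{P}_2$ is not convex.
   Context: A topologically closed convex polyhedron in $\mathbb{R}^n$ is a set of the form $\{\mathbf{x}\in\mathbb{R}^n : \langle\mathbf{a}_k,\mathbf{x}\rangle\le b_k,\ k=1,\dots,m\}$ for finitely many constraints with $\mathbf{a}_k\neq\mathbf{0}$. *)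

From HB Require Import structures.
From mathcomp Require Import all_boot all_order all_algebra.
From mathcomp Require Import reals.
Set Implicit Arguments. Unset Strict Implicit. Unset Printing Implicit Defensive.
Import Order.TTheory GRing.Theory Num.Theory.
Local Open Scope ring_scope.

Definition dotv (R : realType) (n : nat) (a x : 'rV[R]_n) : R :=
  \sum_(i < n) a 0 i * x 0 i.

Definition closed_polyhedron (R : realType) (n : nat) (P : 'rV[R]_n -> Prop) :=
  exists (m : nat) (A : 'I_m -> 'rV[R]_n) (B : 'I_m -> R),
    (forall k, A k != 0) /\
    (forall x, P x <-> (forall k, dotv (A k) x <= B k)).

Definition convex_set (R : realType) (n : nat) (S : 'rV[R]_n -> Prop) :=
  forall x y (t : R), S x -> S y -> 0 <= t -> t <= 1 ->
    S ((1 - t) *: x + t *: y).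

From HB Require Import structures.
From mathcomp Require Import all_boot all_order all_algebra.
From mathcomp Require Import reals.
From mathcomp Require Import ring lra.
Import Order.TTheory GRing.Theory Num.Theory.
Local Open Scope ring_scope.

(* Let q be a point of P2 violating beta. Since p is outside P2 it strictly
   violates some defining constraint of P2, and so do the points of the
   segment [p, q] close enough to p; these points are therefore not in P2.
   On the other hand <a, .> equals b at p and exceeds b at q, so every point
   of the segment other than p strictly violates beta and is not in P1.
   Hence the segment leaves P1 \/ P2 although both endpoints lie in it. *)

Lemma dotv_lerp (R : realType) (n : nat) (u x y : 'rV[R]_n) (t : R) :
  dotv u ((1 - t) *: x + t *: y) = (1 - t) * dotv u x + t * dotv u y.
Proof.
rewrite /dotv !mulr_sumr -big_split /=; apply: eq_bigr => i _.
by rewrite !mxE; ring.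
Qed.

Lemma lerp_gt_near_left (R : realType) (c d B : R) : B < c ->
  exists t : R, [/\ 0 < t, t <= 1 & B < (1 - t) * c + t * d].
Proof.
move=> ltBc; set e := c - B; set m := `|c - d|.
have e_gt0 : 0 < e by rewrite subr_gt0.
have m_ge0 : 0 <= m by rewrite normr_ge0.
have cd_le : c - d <= m by rewrite ler_norm.
have den_gt0 : 0 < 2 * (e + m) by rewrite mulr_gt0 // ltr_wpDr.
(* t is chosen so that t * |c - d| <= e / 2. *)
set t := e / (2 * (e + m)).
have tE : t * (2 * (e + m)) = e by rewrite mulfVK ?gt_eqF.
have t_gt0 : 0 < t by rewrite divr_gt0.
exists t; split => //; first by nra.
have -> : (1 - t) * c + t * d = c - t * (c - d) by ring.
have : t * (c - d) <= t * m by rewrite ler_pM2l.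
by rewrite /e in tE e_gt0 *; nra.
Qed.

Lemma not_all_le_exists_gt (R : realType) (n m : nat)
    (A : 'I_m -> 'rV[R]_n) (B : 'I_m -> R) (x : 'rV[R]_n) :
  ~ (forall k, dotv (A k) x <= B k) -> exists k, B k < dotv (A k) x.
Proof.
move=> not_all_le; have [/existsP [k]|no_gt] := boolP [exists k, B k < dotv (A k) x].
  by exists k.
by exfalso; apply: not_all_le => k; rewrite leNgt; apply: contra no_gt => gt_k;
  apply/existsP; exists k.
Qed.

Theorem lemma1 (R : realType) (n : nat) (P1 P2 : 'rV[R]_n -> Prop)
  (a : 'rV[R]_n) (b : R) (p : 'rV[R]_n) :
  closed_polyhedron P1 -> closed_polyhedron P2 ->
  (exists x, P1 x) -> (exists x, P2 x) ->
  a != 0 ->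
  dotv a p = b ->
  (forall x, P1 x -> dotv a x <= b) ->
  (exists x, P2 x /\ ~ (dotv a x <= b)) ->
  P1 p -> ~ P2 p ->
  ~ convex_set (fun x => P1 x \/ P2 x).
Proof.
move=> _ [m [A [B [_ P2E]]]] _ _ _ ap_eq P1_le [q [P2q aq_gt]] P1p P2Np convU.
have [k Ak_gt] : exists k, B k < dotv (A k) p.
  by apply: not_all_le_exists_gt => /P2E.
have [t [t_gt0 t_le1 Akt_gt]] := @lerp_gt_near_left R _ (dotv (A k) q) _ Ak_gt.
have {}aq_gt : b < dotv a q by rewrite ltNge; apply/negP.
case: (convU p q t (or_introl P1p) (or_intror P2q) (ltW t_gt0) t_le1).
- move/P1_le; rewrite dotv_lerp ap_eq.
  have -> : (1 - t) * b + t * dotv a q = b + t * (dotv a q - b) by ring.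
  by rewrite gerDl leNgt mulr_gt0 // subr_gt0.
- by move/P2E/(_ k); rewrite dotv_lerp leNgt Akt_gt.
Qed.
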